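(* Let $\mathcal V=\{1,\dots,V\}$, $L\ge2$, integers $1\le K<V$, distinct positions $l_1,l_2\in\{1,\dots,L\}$, $\rho\in(0,1)$ with $\rho K\in\mathbb N$, $\mu=\rho/(1-\rho)$, $a\in[\rho,1]$, $b=\mu(1-a)$, and $\epsilon\in[0,1/2]$. Let $P$ be the distribution on $\mathcal V^L$ with $P(\mathbf x)=\prod_{l=1}^L P(x_l\mid\mathbf x_{<l})$, where for every $l$ and every context $\mathbf x_{<l}$, $P(\cdot\mid\mathbf x_{<l})$ is uniform on a set $\mathcal S(\mathbf x_{<l})\subset\mathcal V$ of size $K$, with $\mathcal S(\mathbf x_{<l_1})=\{1,\dots,K\}$ for all contexts at position $l_1$. Let $Q$ be the autoregressive distribution whose conditionals equal those of $P$ at every position $l\notin\{l_1,l_2\}$ and every context, and for every context satisfy $$Q(x\mid\mathbf x_{<l_1})=\begin{cases}\frac{a}{\rho K}& x\in\{1,\dots,\rho K\}\\ \frac{b}{\rho K}& x\in\{\rho K+1,\dots,K\}\\ 0&\text{otherwise,}\end{cases}\qquad Q(x\mid\mathbf x_{<l_2})=\begin{cases}\frac{1-\epsilon}{K}& x\in\mathcal S(\mathbf x_{<l_2})\\ \frac{\epsilon}{V-K}&\text{otherwise.}\end{cases}$$ For $t>0$ let $\tau=1/t$ and let $Q^t$ be the tempered distribution $Q^t(\mathbf x)=\prod_{l}Q(x_l\mid\mathbf x_{<l})^{\tau}/\sum_{y\in\mathcal V}Q(y\mid\mathbf x_{<l})^{\tau}$ (with $0^\tau=0$). Set $$F=\frac{(1-\epsilon)^{\tau}}{(1-\epsilon)^{\tau}+(V/K-1)^{1-\tau}\epsilon^{\tau}},\quad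 \lambda^t_{\min}=\frac{1}{1-\rho}\,\frac{(1-a)^{\tau}}{(1-a)^{\tau}+\mu^{1-\tau}a^{\tau}}\,F,\quad \lambda^t_{\max}=\frac{\mu^{-\tau}}{1-\rho}\,\frac{a^{\tau}}{(1-a)^{\tau}+\mu^{1-\tau}a^{\tau}}\,F.$$ Then: (i) for all $\lambda\ge\lambda^t_{\max}$: $\alpha_\lambda(P\Vert Q^t)=F$ and $\beta_\lambda(P\Vert Q^t)=F/\lambda$; (ii) for all $\lambda\in[\lambda^t_{\min},\lambda^t_{\max}]$ with $\lambda>0$: $\alpha_\lambda(P\Vert Q^t)=\rho\lambda+\frac{(1-a)^{\tau}}{(1-a)^{\tau}+\mu^{1-\tau}a^{\tau}}F$ and $\beta_\lambda(P\Vert Q^t)=\rho+\frac1\lambda\frac{(1-a)^{\tau}}{(1-a)^{\tau}+\mu^{1-\tau}a^{\tau}}F$; (iii) for all $0<\lambda\le\lambda^t_{\min}$: $\alpha_\lambda(P\Vert Q^t)=\lambda$ and $\beta_\lambda(P\Vert Q^t)=1$.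
   Context: For distributions $P,Q$ on $\mathcal V^L$ and $\lambda>0$: $\alpha_\lambda(P\Vert Q)=\sum_{\mathbf x}\min(\lambda P(\mathbf x),Q(\mathbf x))$ (Precision) and $\beta_\lambda(P\Vert Q)=\sum_{\mathbf x}\min(P(\mathbf x),Q(\mathbf x)/\lambda)$ (Recall). $\mathbf x_{<l}=(x_1,\dots,x_{l-1})$. Note that $b=\mu(1-a)$ is exactly the value making $Q(\cdot\mid\mathbf x_{<l_1})$ sum to one. *)

(* + MathComp-Analysis (for real powers powR, with 0 `^ t = 0 for t > 0). *)
From mathcomp Require Import all_boot all_order all_algebra.
From mathcomp Require Import reals exp.
Set Implicit Arguments. Unset Strict Implicit. Unset Printing Implicit Defensive.
Import Order.TTheory GRing.Theory Num.Theory.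
Local Open Scope ring_scope.

(* Vocabulary 'I_V (token v : 'I_V stands for v+1 in the paper's {1,..,V}).
   Sequences are L.-tuple 'I_V; position l (0-indexed, l : 'I_L) has context
   x_{<l} = take l x, a seq of length l. *)

Definition autoreg (R : realType) (V L : nat) (cond : seq 'I_V -> 'I_V -> R)
  (x : L.-tuple 'I_V) : R :=
  \prod_(i < L) cond (take i x) (tnth x i).

Definition temper (R : realType) (V : nat) (tau : R) (cond : seq 'I_V -> 'I_V -> R)
  (c : seq 'I_V) (x : 'I_V) : R :=
  cond c x `^ tau / \sum_(y : 'I_V) cond c y `^ tau.

(* Precision alpha_lambda(P || Q) and Recall beta_lambda(P || Q) *)
Definition precision (R : realType) (T : finType) (lam : R) (P Q : T -> R) : R :=
  \sum_(x : T) Num.min (lam * P x) (Q x).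
Definition recall (R : realType) (T : finType) (lam : R) (P Q : T -> R) : R :=
  \sum_(x : T) Num.min (P x) (Q x / lam).

Definition mu_of (R : realType) (rho : R) : R := rho / (1 - rho).

Definition Fconst (R : realType) (V K : nat) (eps tau : R) : R :=
  (1 - eps) `^ tau /
  ((1 - eps) `^ tau + (V%:R / K%:R - 1) `^ (1 - tau) * eps `^ tau).

Definition Gconst (R : realType) (rho a tau : R) : R :=
  (1 - a) `^ tau / ((1 - a) `^ tau + mu_of rho `^ (1 - tau) * a `^ tau).

Definition lam_min (R : realType) (V K : nat) (rho a eps tau : R) : R :=
  (1 - rho)^-1 * Gconst rho a tau * Fconst V K eps tau.

Definition lam_max (R : realType) (V K : nat) (rho a eps tau : R) : R :=
  mu_of rho `^ (- tau) / (1 - rho) *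
  (a `^ tau / ((1 - a) `^ tau + mu_of rho `^ (1 - tau) * a `^ tau)) *
  Fconst V K eps tau.

(* On the support of P every token x_l lies in S(x_{<l}).  There tempering
   leaves the uniform conditionals unchanged and reweights the two modified
   positions: by F at l2, and at l1 by [block_weight], i.e. by (1-G)/rho on
   the first rho K tokens and by G/(1-rho) on the others.  Hence
   Q^t = P * F * block_weight(x_{l1}) on supp P, and since x_{l1} is uniform on
   {1..K} under P,
     alpha_lambda = E_P[min(lambda, F block_weight(x_{l1}))]
                  = rho min(lambda, lam_max) + (1-rho) min(lambda, lam_min),
   because F (1-G)/rho = lam_max and F G/(1-rho) = lam_min.  Finally
   beta_lambda = alpha_lambda / lambda. *)

From mathcomp Require Import all_boot all_order all_algebra.
From mathcomp Require Import reals exp.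
From mathcomp Require Import ring lra.
Set Implicit Arguments.
Unset Strict Implicit.
Unset Printing Implicit Defensive.
Import Order.TTheory GRing.Theory Num.Theory.
Local Open Scope ring_scope.

Lemma size_take_ord (T : Type) n (x : n.-tuple T) (i : 'I_n) : size (take i x) = i.
Proof. by rewrite size_takel // size_tuple ltnW. Qed.

Section Autoregressive.
Variables (R : realType) (V : nat).
Implicit Types (cond : seq 'I_V -> 'I_V -> R) (c : seq 'I_V).

Lemma big_tuple_cons (T : finType) n (F : n.+1.-tuple T -> R) :
  \sum_(x : n.+1.-tuple T) F x =
  \sum_(y : T) \sum_(x : n.-tuple T) F [tuple of y :: x].
Proof.
rewrite pair_big /= (reindex (fun p : T * n.-tuple T => [tuple of p.1 :: p.2])) //=.
exists (fun x : n.+1.-tuple T => (thead x, [tuple of behead x])).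
  by case=> y x _ /=; rewrite theadE; congr pair; apply: val_inj.
by move=> x _; rewrite [in RHS](tuple_eta x).
Qed.

Lemma autoreg_cons n cond y (x : n.-tuple 'I_V) :
  autoreg cond [tuple of y :: x] = cond [::] y * autoreg (fun c => cond (y :: c)) x.
Proof.
rewrite /autoreg big_ord_recl /=; congr (_ * _).
by apply: eq_bigr => i _; rewrite tnthS.
Qed.

Lemma autoreg_sum1 n cond :
  (forall c, (size c < n)%N -> \sum_y cond c y = 1) ->
  \sum_(x : n.-tuple 'I_V) autoreg cond x = 1.
Proof.
elim: n cond => [|n IH] cond cond_sum1.
  rewrite (big_pred1 [tuple]) /=; first by rewrite /autoreg big_ord0.
  by move=> x; symmetry; apply/eqP; exact: tuple0.
rewrite big_tuple_cons -[RHS](cond_sum1 [::]) //; apply: eq_bigr => y _.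
under eq_bigr => x _ do rewrite autoreg_cons.
by rewrite -mulr_sumr IH ?mulr1 // => c c_lt; apply: cond_sum1.
Qed.

Lemma autoreg_marginal n cond (l : nat) (p g : 'I_V -> R) (x0 : 'I_V) :
  (forall c, (size c < n)%N -> \sum_y cond c y = 1) ->
  (forall c y, size c = l -> cond c y = p y) -> (l < n)%N ->
  \sum_(x : n.-tuple 'I_V) autoreg cond x * g (nth x0 x l) = \sum_v p v * g v.
Proof.
elim: n cond l => [|n IH] cond l cond_sum1 condE // l_lt.
rewrite big_tuple_cons; case: l condE l_lt => [|l] condE l_lt.
  apply: eq_bigr => y _.
  under eq_bigr => x _ do rewrite autoreg_cons /= mulrAC.
  by rewrite -mulr_sumr autoreg_sum1 ?mulr1 ?(condE [::] y) // => c c_lt; apply: cond_sum1.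
rewrite -[RHS]mul1r -(cond_sum1 [::]) // mulr_suml; apply: eq_bigr => y _.
under eq_bigr => x _ do rewrite autoreg_cons /= -mulrA.
rewrite -mulr_sumr (IH _ l) // => [c c_lt|c z c_l]; first exact: cond_sum1.
by apply: condE => /=; rewrite c_l.
Qed.

Lemma autoreg_mulr n cond cond' (w : 'I_n -> 'I_V -> R) (x : n.-tuple 'I_V) :
  (forall i : 'I_n, cond' (take i x) (tnth x i) =
                    cond (take i x) (tnth x i) * w i (tnth x i)) ->
  autoreg cond' x = autoreg cond x * \prod_(i < n) w i (tnth x i).
Proof. by move=> condE; rewrite /autoreg -big_split; apply: eq_bigr => i _. Qed.

Lemma temper_ge0 (tau : R) cond c y : 0 <= temper tau cond c y.
Proof.
by apply: divr_ge0; [exact: powR_ge0 | apply: sumr_ge0 => z _; exact: powR_ge0].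
Qed.

End Autoregressive.

Section CountingSums.
Variables (R : realType) (V : nat).

Lemma sumr_if_in (A : {set 'I_V}) (p q : R) :
  \sum_(y : 'I_V) (if y \in A then p else q) = #|A|%:R * p + (V - #|A|)%:R * q.
Proof.
rewrite (bigID (mem A)) /= (eq_bigr (fun=> p)) => [|y ->] //.
rewrite [X in _ + X](eq_bigr (fun=> q)) => [|y /negbTE ->] //.
rewrite !sumr_const -[p *+ _]mulr_natl -[q *+ _]mulr_natl.
congr (_ + _%:R * _); apply: (@addnI #|A|).
by rewrite cardC card_ord subnKC // -[X in (_ <= X)%N]card_ord max_card.
Qed.

Lemma sumr_if_ltn (r k : nat) (p q : R) : (r <= k <= V)%N ->
  \sum_(y < V) (if (y < r)%N then p else if (y < k)%N then q else 0)
  = r%:R * p + (k - r)%:R * q.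
Proof.
move=> /andP[r_le_k k_le_V].
rewrite -(big_mkord xpredT (fun y => if (y < r)%N then p else if (y < k)%N then q else 0)).
rewrite (big_cat_nat (leq0n r) (leq_trans r_le_k k_le_V)) (big_cat_nat r_le_k k_le_V) /=.
rewrite (@eq_big_nat _ _ _ 0 r _ (fun=> p)) => [|i /andP[_ ->]] //.
rewrite (@eq_big_nat _ _ _ r k _ (fun=> q)) => [|i /andP[r_le_i ->]]; last first.
  by rewrite ltnNge r_le_i.
rewrite (@eq_big_nat _ _ _ k V _ (fun=> 0)) => [|i /andP[k_le_i _]]; last first.
  by rewrite ltnNge (leq_trans r_le_k k_le_i) ltnNge k_le_i.
by rewrite !sumr_const_nat mul0rn addr0 subn0 -[p *+ _]mulr_natl -[q *+ _]mulr_natl.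
Qed.
End CountingSums.

Lemma leq_scaled_nat (R : realType) (rho : R) (K rK : nat) :
  rho <= 1 -> rho * K%:R = rK%:R -> (rK <= K)%N.
Proof. by move=> rho_le1 rhoK; rewrite -(ler_nat R) -rhoK ler_piMl. Qed.

Section PrecisionRecall.
Variables (R : realType) (T : finType).
Implicit Types (lam : R) (P Q w : T -> R).

Lemma recall_precision lam P Q : 0 < lam -> recall lam P Q = precision lam P Q / lam.
Proof.
move=> lam_gt0; rewrite /recall /precision mulr_suml; apply: eq_bigr => x _.
by rewrite minr_pMl ?invr_ge0 ?ltW // mulrAC divff ?gt_eqF // mul1r.
Qed.

Lemma precision_density lam P Q w :
  (forall x, 0 <= P x) -> (forall x, 0 <= Q x) ->
  (forall x, P x != 0 -> Q x = P x * w x) ->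
  precision lam P Q = \sum_x P x * Num.min lam (w x).
Proof.
move=> P_ge0 Q_ge0 QE; apply: eq_bigr => x _.
have [->|Px_neq0] := eqVneq (P x) 0; first by rewrite mulr0 mul0r min_l.
by rewrite QE // minr_pMr // [lam * _]mulrC.
Qed.

End PrecisionRecall.

Section RealPowers.
Variable R : realType.
Implicit Types x y r : R.

Lemma powRV x r : 0 <= x -> x^-1 `^ r = (x `^ r)^-1.
Proof. by move=> x_ge0; rewrite -powR_inv1 // -powRrM mulN1r powRN. Qed.

Lemma powR_div x y r : 0 <= x -> 0 <= y -> (x / y) `^ r = x `^ r / y `^ r.
Proof. by move=> x_ge0 y_ge0; rewrite powRM ?invr_ge0 // powRV. Qed.

Lemma powR1B x r : 0 < x -> x `^ (1 - r) = x / x `^ r.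
Proof.
move=> x_gt0; rewrite powRB ?powRr1 ?ltW //.
by apply/implyP => _; rewrite gt_eqF.
Qed.

End RealPowers.

Lemma Fconst_gt0 (R : realType) V K (eps tau : R) : eps < 1 -> 0 < Fconst V K eps tau.
Proof.
move=> eps_lt1; rewrite /Fconst.
have num_gt0 : 0 < (1 - eps) `^ tau by apply: powR_gt0; lra.
by rewrite divr_gt0 // ltr_wpDr // mulr_ge0 // powR_ge0.
Qed.

Lemma mu_of_gt0 (R : realType) (rho : R) : 0 < rho < 1 -> 0 < mu_of rho.
Proof. by move=> /andP[rho_gt0 rho_lt1]; rewrite divr_gt0 // subr_gt0. Qed.

Lemma Gconst_le (R : realType) (rho a tau : R) :
  0 < rho < 1 -> rho <= a <= 1 -> 0 < tau -> Gconst rho a tau <= 1 - rho.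
Proof.
move=> rho_bds /andP[rho_le_a a_le1] tau_gt0.
have mu_gt0 := mu_of_gt0 rho_bds; case/andP: rho_bds => rho_gt0 rho_lt1.
have mu_le : mu_of rho * (1 - a) <= a.
  by rewrite /mu_of mulrAC ler_pdivrMr ?subr_gt0 //; lra.
have : (mu_of rho * (1 - a)) `^ tau <= a `^ tau.
  apply: ge0_ler_powR => //; first exact: ltW.
    by rewrite nnegrE; apply: mulr_ge0; [exact: ltW | rewrite subr_ge0].
  by rewrite nnegrE; lra.
rewrite /Gconst powRM ?subr_ge0 ?(ltW mu_gt0) // powR1B //.
have Mt : 0 < mu_of rho `^ tau by apply: powR_gt0.
have At : 0 < a `^ tau by apply: powR_gt0; lra.
have Bt : 0 <= (1 - a) `^ tau by apply: powR_ge0.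
move: Mt At Bt; set M := mu_of rho `^ tau; set A := a `^ tau; set B := (1 - a) `^ tau.
move=> Mt At Bt MB_le_A.
have D_gt0 : 0 < B + mu_of rho / M * A by rewrite ltr_wpDl // mulr_gt0 // divr_gt0.
rewrite ler_pdivrMr //.
have -> : (1 - rho) * (B + mu_of rho / M * A) = (1 - rho) * B + rho * (A / M).
  by rewrite /mu_of; field; rewrite !gt_eqF ?subr_gt0.
have : B <= A / M by rewrite ler_pdivlMr // mulrC.
nra.
Qed.

Lemma lam_maxE (R : realType) V K (rho a eps tau : R) : 0 < rho < 1 -> 0 < a ->
  lam_max V K rho a eps tau = Fconst V K eps tau * ((1 - Gconst rho a tau) / rho).
Proof.
move=> rho_bds a_gt0; have mu_gt0 := mu_of_gt0 rho_bds.
case/andP: rho_bds => rho_gt0 rho_lt1.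
rewrite /lam_max /Gconst powR1B // powRN.
have Mt : 0 < mu_of rho `^ tau by apply: powR_gt0.
have At : 0 < a `^ tau by apply: powR_gt0.
have Bt : 0 <= (1 - a) `^ tau by apply: powR_ge0.
move: Mt At Bt; set M := mu_of rho `^ tau; set A := a `^ tau; set B := (1 - a) `^ tau.
move=> Mt At Bt.
have r1_gt0 : 0 < 1 - rho by rewrite subr_gt0.
have D_gt0 : 0 < B * ((1 - rho) * M) + rho * A.
  exact: ltr_wpDl (mulr_ge0 Bt (ltW (mulr_gt0 r1_gt0 Mt))) (mulr_gt0 rho_gt0 At).
by rewrite /mu_of; field; rewrite !gt_eqF.
Qed.

Lemma lam_minE (R : realType) V K (rho a eps tau : R) :
  lam_min V K rho a eps tau = Fconst V K eps tau * (Gconst rho a tau / (1 - rho)).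
Proof. by rewrite /lam_min mulrC [_^-1 * _]mulrC. Qed.

Lemma lam_max_min_mean (R : realType) V K (rho a eps tau : R) :
  0 < rho < 1 -> rho <= a <= 1 ->
  rho * lam_max V K rho a eps tau + (1 - rho) * lam_min V K rho a eps tau =
  Fconst V K eps tau.
Proof.
move=> rho_bds /andP[rho_le_a _]; case/andP: (rho_bds) => rho_gt0 rho_lt1.
rewrite lam_maxE ?(lt_le_trans rho_gt0 rho_le_a) // lam_minE; field.
by rewrite !gt_eqF ?subr_gt0.
Qed.

Lemma lam_min_le_max (R : realType) V K (rho a eps tau : R) :
  0 < rho < 1 -> rho <= a <= 1 -> eps < 1 -> 0 < tau ->
  lam_min V K rho a eps tau <= lam_max V K rho a eps tau.
Proof.
move=> rho_bds a_bds eps_lt1 tau_gt0.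
have G_le := Gconst_le rho_bds a_bds tau_gt0.
case/andP: (rho_bds) a_bds => rho_gt0 rho_lt1 /andP[rho_le_a _].
rewrite lam_maxE ?(lt_le_trans rho_gt0 rho_le_a) // lam_minE.
rewrite ler_wpM2l ?(ltW (Fconst_gt0 _ _ _ eps_lt1)) //.
by rewrite ler_pdivrMr ?subr_gt0 // mulrAC ler_pdivlMr //; nra.
Qed.

Definition block_weight (R : realType) V (rK : nat) (rho a tau : R) (y : 'I_V) : R :=
  if (y < rK)%N then (1 - Gconst rho a tau) / rho else Gconst rho a tau / (1 - rho).

Lemma tempered_block_masses (R : realType) (rho k a tau : R) :
  0 < rho < 1 -> 0 < k -> rho <= a <= 1 ->
  let Z := rho * k * (a / (rho * k)) `^ tau +
           (k - rho * k) * (mu_of rho * (1 - a) / (rho * k)) `^ tau in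
  (a / (rho * k)) `^ tau / Z = k^-1 * ((1 - Gconst rho a tau) / rho) /\
  (mu_of rho * (1 - a) / (rho * k)) `^ tau / Z = k^-1 * (Gconst rho a tau / (1 - rho)).
Proof.
move=> rho_bds k_gt0 /andP[rho_le_a a_le1] Z.
have mu_gt0 := mu_of_gt0 rho_bds; case/andP: rho_bds => rho_gt0 rho_lt1.
have a_gt0 : 0 < a by lra.
have rk_gt0 : 0 < rho * k by apply: mulr_gt0.
have b_ge0 : 0 <= 1 - a by lra.
have muE : mu_of rho = rho / (1 - rho) by [].
rewrite /Z /Gconst; move: mu_gt0 muE; move: (mu_of rho) => mu mu_gt0 muE.
rewrite powR1B // !powR_div ?(ltW a_gt0) ?(ltW rk_gt0) ?(mulr_ge0 (ltW mu_gt0) b_ge0) //.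
rewrite [(mu * _) `^ _]powRM ?(ltW mu_gt0) //.
have Mt : 0 < mu `^ tau by apply: powR_gt0.
have At : 0 < a `^ tau by apply: powR_gt0.
have Kt : 0 < (rho * k) `^ tau by apply: powR_gt0.
have Bt : 0 <= (1 - a) `^ tau by apply: powR_ge0.
move: Mt At Kt Bt; set M := mu `^ tau; set A := a `^ tau.
set Kt := (rho * k) `^ tau; set B := (1 - a) `^ tau => Mt At Kt_gt0 Bt.
have r1_gt0 : 0 < 1 - rho by lra.
have kr_gt0 : 0 < k - rho * k by nra.
have D1_gt0 : 0 < B * ((1 - rho) * M) + rho * A.
  exact: ltr_wpDl (mulr_ge0 Bt (ltW (mulr_gt0 r1_gt0 Mt))) (mulr_gt0 rho_gt0 At).
have D2_gt0 : 0 < rho * k * A + (k - rho * k) * (M * B).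
  exact: ltr_wpDr (mulr_ge0 (ltW kr_gt0) (mulr_ge0 (ltW Mt) Bt)) (mulr_gt0 rk_gt0 At).
by rewrite muE; split; field; rewrite !gt_eqF.
Qed.

Section Tempering.
Variables (R : realType) (V : nat) (tau : R) (cond : seq 'I_V -> 'I_V -> R) (c : seq 'I_V).

Lemma temper_uniform (A : {set 'I_V}) (p : R) (y : 'I_V) :
  tau != 0 -> 0 < p -> (forall z, cond c z = if z \in A then p else 0) -> y \in A ->
  temper tau cond c y = #|A|%:R^-1.
Proof.
move=> tau_neq0 p_gt0 condE yA; rewrite /temper condE yA.
rewrite (eq_bigr (fun z => if z \in A then p `^ tau else 0)); last first.
  by move=> z _; rewrite condE; case: ifP => // _; rewrite powR0.
rewrite sumr_if_in mulr0 addr0 invfM mulrCA divff ?mulr1 //.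
by rewrite gt_eqF // powR_gt0.
Qed.

Lemma temper_eps_uniform (A : {set 'I_V}) (K : nat) (eps : R) (y : 'I_V) :
  (0 < K < V)%N -> #|A| = K -> 0 <= eps < 1 ->
  (forall z, cond c z = if z \in A then (1 - eps) / K%:R else eps / (V - K)%:R) ->
  y \in A -> temper tau cond c y = K%:R^-1 * Fconst V K eps tau.
Proof.
move=> /andP[K_gt0 K_lt_V] card_A /andP[eps_ge0 eps_lt1] condE yA.
rewrite /temper condE yA.
rewrite (eq_bigr (fun z => if z \in A then ((1 - eps) / K%:R) `^ tau
                           else (eps / (V - K)%:R) `^ tau)); last first.
  by move=> z _; rewrite condE; case: ifP.
have k_gt0 : (0 : R) < K%:R by rewrite ltr0n.
have m_gt0 : (0 : R) < (V - K)%:R by rewrite ltr0n subn_gt0.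
rewrite sumr_if_in card_A /Fconst.
have -> : V%:R / K%:R - 1 = (V - K)%:R / K%:R :> R.
  by rewrite natrB ?(ltnW K_lt_V) //; field; rewrite gt_eqF.
move: k_gt0 m_gt0; set k : R := K%:R; set m : R := (V - K)%:R => k_gt0 m_gt0.
have e1_gt0 : 0 < 1 - eps by lra.
rewrite !powR_div ?(ltW k_gt0) ?(ltW m_gt0) ?(ltW e1_gt0) // !powR1B //.
have kt : 0 < k `^ tau by apply: powR_gt0.
have mt : 0 < m `^ tau by apply: powR_gt0.
have At : 0 < (1 - eps) `^ tau by apply: powR_gt0.
have Bt : 0 <= eps `^ tau by apply: powR_ge0.
move: kt mt At Bt; set Kt := k `^ tau; set Mt := m `^ tau.
set A' := (1 - eps) `^ tau; set B := eps `^ tau => kt mt At Bt.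
have D_gt0 : 0 < A' * (Mt * k) + m * Kt * B.
  exact: ltr_wpDr (mulr_ge0 (mulr_ge0 (ltW m_gt0) (ltW kt)) Bt)
    (mulr_gt0 At (mulr_gt0 mt k_gt0)).
by field; rewrite !gt_eqF.
Qed.

Lemma temper_two_block (K rK : nat) (rho a : R) (y : 'I_V) :
  tau != 0 -> 0 < rho < 1 -> rho <= a <= 1 -> (K <= V)%N -> rho * K%:R = rK%:R ->
  (forall z, cond c z = if (z < rK)%N then a / rK%:R
                        else if (z < K)%N then mu_of rho * (1 - a) / rK%:R else 0) ->
  (y < K)%N -> temper tau cond c y = K%:R^-1 * block_weight rK rho a tau y.
Proof.
move=> tau_neq0 rho_bds a_bds K_le_V rhoK condE y_lt_K.
have K_gt0 : (0 : R) < K%:R by rewrite ltr0n (leq_ltn_trans _ y_lt_K).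
have rK_le_K : (rK <= K)%N.
  by case/andP: (rho_bds) => _ /ltW rho_le1; exact: leq_scaled_nat rho_le1 rhoK.
rewrite /temper condE.
rewrite (eq_bigr (fun z : 'I_V => if (z < rK)%N then (a / rK%:R) `^ tau
    else if (z < K)%N then (mu_of rho * (1 - a) / rK%:R) `^ tau else 0)); last first.
  by move=> z _; rewrite condE; do 2 case: ifP => //; rewrite powR0.
rewrite sumr_if_ltn ?rK_le_K // natrB // -rhoK.
have [masses_lt masses_ge] := tempered_block_masses tau rho_bds K_gt0 a_bds.
by rewrite /block_weight; case: ifP => _; rewrite ?y_lt_K.
Qed.

End Tempering.

Section TemperedModel.
Variables (R : realType) (V L K rK : nat) (l1 l2 : 'I_L) (rho a eps tau : R).
Variables (S : seq 'I_V -> {set 'I_V}) (Pc Qc : seq 'I_V -> 'I_V -> R).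
Hypotheses (K_gt0 : (1 <= K)%N) (K_lt_V : (K < V)%N) (l1_neq_l2 : l1 != l2).
Hypotheses (rho_bds : 0 < rho < 1) (rhoK : rho * K%:R = rK%:R).
Hypotheses (a_bds : rho <= a <= 1) (eps_bds : 0 <= eps <= 1 / 2) (tau_gt0 : 0 < tau).
Hypothesis card_S : forall c : seq 'I_V, (size c < L)%N -> #|S c| = K.
Hypothesis S_l1 : forall c : seq 'I_V, size c = l1 -> S c = [set x : 'I_V | (x < K)%N].
Hypothesis PcE : forall (c : seq 'I_V) (x : 'I_V), (size c < L)%N ->
  Pc c x = if x \in S c then K%:R^-1 else 0.
Hypothesis QcE : forall (c : seq 'I_V) (x : 'I_V), (size c < L)%N ->
  size c != l1 -> size c != l2 -> Qc c x = Pc c x.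
Hypothesis Qc_l1 : forall (c : seq 'I_V) (x : 'I_V), size c = l1 ->
  Qc c x = if (x < rK)%N then a / rK%:R
           else if (x < K)%N then mu_of rho * (1 - a) / rK%:R else 0.
Hypothesis Qc_l2 : forall (c : seq 'I_V) (x : 'I_V), size c = l2 ->
  Qc c x = if x \in S c then (1 - eps) / K%:R else eps / (V - K)%:R.

Local Notation F := (Fconst V K eps tau).
Local Notation P := (autoreg (L:=L) Pc).
Local Notation Qt := (autoreg (L:=L) (temper tau Qc)).
Local Notation lmax := (lam_max V K rho a eps tau).
Local Notation lmin := (lam_min V K rho a eps tau).

Let natK_gt0 : (0 : R) < K%:R. Proof. by rewrite ltr0n. Qed.
Let a_gt0 : 0 < a.
Proof. by case/andP: rho_bds a_bds => rho_gt0 _ /andP[+ _]; apply: lt_le_trans. Qed.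
Let eps_lt1 : eps < 1. Proof. by case/andP: eps_bds => _ eps_le; lra. Qed.
Let rK_le_K : (rK <= K)%N.
Proof. by case/andP: rho_bds => _ /ltW rho_le1; exact: leq_scaled_nat rho_le1 rhoK. Qed.

Let weight (i : 'I_L) (y : 'I_V) : R :=
  if i == l1 then block_weight rK rho a tau y else if i == l2 then F else 1.

Lemma temperQ_support (c : seq 'I_V) (i : 'I_L) (y : 'I_V) :
  size c = i -> y \in S c -> temper tau Qc c y = Pc c y * weight i y.
Proof.
move=> c_i yS; have c_lt : (size c < L)%N by rewrite c_i.
have tau_neq0 : tau != 0 by rewrite gt_eqF.
rewrite PcE // yS /weight.
have [i_l1|i_neq_l1] := eqVneq i l1.
  have c_l1 : size c = l1 by rewrite c_i i_l1.
  move: yS; rewrite S_l1 // inE => y_lt_K.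
  exact: temper_two_block tau_neq0 rho_bds a_bds (ltnW K_lt_V) rhoK
    (@Qc_l1 c ^~ c_l1) y_lt_K.
have [i_l2|i_neq_l2] := eqVneq i l2.
  have c_l2 : size c = l2 by rewrite c_i i_l2.
  have K_bds : (0 < K < V)%N by rewrite K_gt0.
  have eps_bds_lt1 : 0 <= eps < 1 by case/andP: eps_bds => -> _.
  exact: temper_eps_uniform K_bds (card_S c_lt) eps_bds_lt1 (@Qc_l2 c ^~ c_l2) yS.
have condE z : Qc c z = if z \in S c then K%:R^-1 else 0.
  by rewrite QcE ?PcE // c_i.
by rewrite mulr1 -(card_S c_lt) (temper_uniform tau_neq0 _ condE yS) // invr_gt0.
Qed.

Lemma P_support (x : L.-tuple 'I_V) (i : 'I_L) : P x != 0 -> tnth x i \in S (take i x).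
Proof.
apply: contraR => x_notin_S.
by rewrite /autoreg (bigD1 i) //= PcE ?size_take_ord // (negbTE x_notin_S) mul0r.
Qed.

Lemma Qt_support (x : L.-tuple 'I_V) :
  P x != 0 -> Qt x = P x * (F * block_weight rK rho a tau (tnth x l1)).
Proof.
move=> Px_neq0; rewrite (autoreg_mulr (cond := Pc) (w := weight)); last first.
  by move=> i; apply: temperQ_support (size_take_ord x i) (P_support i Px_neq0).
congr (_ * _); rewrite (bigD1 l1) // (bigD1 l2) /=; last by rewrite eq_sym.
rewrite big1 => [|j /andP[/negbTE j_neq_l2 /negbTE j_neq_l1]]; last first.
  by rewrite /weight j_neq_l1 j_neq_l2.
by rewrite /weight eqxx eq_sym (negbTE l1_neq_l2) eqxx mulr1 mulrC.
Qed.

Lemma precision_tempered (lam : R) : 0 < lam ->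
  precision lam P Qt = rho * Num.min lam lmax + (1 - rho) * Num.min lam lmin.
Proof.
move=> lam_gt0; pose x0 : 'I_V := Ordinal (leq_ltn_trans (leq0n K) K_lt_V).
have P_ge0 (x : L.-tuple 'I_V) : 0 <= P x.
  apply: prodr_ge0 => i _; rewrite PcE ?size_take_ord //.
  by case: ifP => // _; rewrite invr_ge0 ler0n.
have Qt_ge0 (x : L.-tuple 'I_V) : 0 <= Qt x.
  by apply: prodr_ge0 => i _; apply: temper_ge0.
have QtE (x : L.-tuple 'I_V) :
    P x != 0 -> Qt x = P x * (F * block_weight rK rho a tau (nth x0 x l1)).
  by move/Qt_support ->; rewrite (tnth_nth x0).
have Pc_sum1 (c : seq 'I_V) : (size c < L)%N -> \sum_y Pc c y = 1.
  move=> c_lt; under eq_bigr => y _ do rewrite PcE //.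
  by rewrite sumr_if_in card_S // mulr0 addr0 divff // gt_eqF.
have Pc_l1 (c : seq 'I_V) y : size c = l1 -> Pc c y = if (y < K)%N then K%:R^-1 else 0.
  by move=> c_l1; rewrite PcE ?c_l1 // S_l1 // inE.
rewrite (precision_density lam P_ge0 Qt_ge0 QtE).
rewrite (autoreg_marginal (fun v => Num.min lam (F * block_weight rK rho a tau v)) x0
  Pc_sum1 Pc_l1 (ltn_ord l1)).
rewrite (eq_bigr (fun v : 'I_V => if (v < rK)%N then K%:R^-1 * Num.min lam lmax
    else if (v < K)%N then K%:R^-1 * Num.min lam lmin else 0)); last first.
  move=> v _; rewrite /block_weight lam_maxE ?a_gt0 // lam_minE.
  case: (ltnP v rK) => [v_lt_rK|_]; first by rewrite (leq_trans v_lt_rK rK_le_K).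
  by case: ifP; rewrite ?mul0r.
rewrite sumr_if_ltn ?rK_le_K ?(ltnW K_lt_V) // natrB // -rhoK.
by field; rewrite gt_eqF.
Qed.

End TemperedModel.

Theorem propositionA2 (R : realType) (V L K rK : nat) (l1 l2 : 'I_L)
    (rho a eps : R)
    (S : seq 'I_V -> {set 'I_V})
    (Pc Qc : seq 'I_V -> 'I_V -> R) :
  (2 <= L)%N -> (1 <= K)%N -> (K < V)%N -> l1 != l2 ->
  0 < rho < 1 -> rho * K%:R = rK%:R ->
  rho <= a <= 1 -> 0 <= eps <= 1 / 2 ->
  (* P: uniform conditionals on sets S(c) of size K *)
  (forall c : seq 'I_V, (size c < L)%N -> #|S c| = K) ->
  (forall c : seq 'I_V, size c = l1 -> S c = [set x : 'I_V | (x < K)%N]) ->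
  (forall (c : seq 'I_V) (x : 'I_V), (size c < L)%N ->
     Pc c x = if x \in S c then K%:R^-1 else 0) ->
  (* Q: equal to P off positions l1, l2 *)
  (forall (c : seq 'I_V) (x : 'I_V), (size c < L)%N ->
     size c != l1 -> size c != l2 -> Qc c x = Pc c x) ->
  (forall (c : seq 'I_V) (x : 'I_V), size c = l1 ->
     Qc c x = if (x < rK)%N then a / rK%:R
              else if (x < K)%N then mu_of rho * (1 - a) / rK%:R
              else 0) ->
  (forall (c : seq 'I_V) (x : 'I_V), size c = l2 ->
     Qc c x = if x \in S c then (1 - eps) / K%:R
              else eps / (V - K)%:R) ->
  forall t : R, 0 < t ->
  let tau := t^-1 in
  let P := autoreg (L:=L) Pc in
  let Qt := autoreg (L:=L) (temper tau Qc) in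
  let F := Fconst V K eps tau in
  let G := Gconst rho a tau in
  let lmin := lam_min V K rho a eps tau in
  let lmax := lam_max V K rho a eps tau in
  (forall lam : R, lmax <= lam ->
     precision lam P Qt = F /\ recall lam P Qt = F / lam) /\
  (forall lam : R, lmin <= lam <= lmax -> 0 < lam ->
     precision lam P Qt = rho * lam + G * F /\
     recall lam P Qt = rho + lam^-1 * (G * F)) /\
  (forall lam : R, 0 < lam -> lam <= lmin ->
     precision lam P Qt = lam /\ recall lam P Qt = 1).
Proof.
move=> _ K_gt0 K_lt_V l1_neq_l2 rho_bds rhoK a_bds eps_bds card_S S_l1 PcE QcE
  Qc_l1 Qc_l2 t t_gt0 tau P Qt F G lmin lmax.
have tau_gt0 : 0 < tau by rewrite invr_gt0.
have eps_lt1 : eps < 1 by case/andP: eps_bds => _; lra.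
have mean : rho * lmax + (1 - rho) * lmin = F := lam_max_min_mean V K eps tau rho_bds a_bds.
have lmin_le_lmax : lmin <= lmax := lam_min_le_max V K rho_bds a_bds eps_lt1 tau_gt0.
have F_le_lmax : F <= lmax by rewrite -mean; case/andP: (rho_bds) => rho_gt0 rho_lt1; nra.
have F_gt0 : 0 < F := Fconst_gt0 V K tau eps_lt1.
have GF : G * F = (1 - rho) * lmin.
  rewrite /lmin /G /F lam_minE; case/andP: rho_bds => _ rho_lt1.
  by field; rewrite gt_eqF ?subr_gt0.
have precisionE lam : 0 < lam ->
    precision lam P Qt = rho * Num.min lam lmax + (1 - rho) * Num.min lam lmin.
  move=> lam_gt0; exact: (precision_tempered K_gt0 K_lt_V l1_neq_l2 rho_bds rhoK a_bds
    eps_bds tau_gt0 card_S S_l1 PcE QcE Qc_l1 Qc_l2 lam_gt0).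
have recallE lam : 0 < lam -> recall lam P Qt = precision lam P Qt / lam.
  exact: recall_precision.
split; [|split].
- move=> lam lmax_le_lam.
  have lam_gt0 : 0 < lam := lt_le_trans F_gt0 (le_trans F_le_lmax lmax_le_lam).
  have precE : precision lam P Qt = F.
    rewrite precisionE // (min_r lmax_le_lam) (min_r (le_trans lmin_le_lmax lmax_le_lam)).
    exact: mean.
  by rewrite recallE // precE.
- move=> lam /andP[lmin_le_lam lam_le_lmax] lam_gt0.
  have precE : precision lam P Qt = rho * lam + G * F.
    by rewrite precisionE // (min_l lam_le_lmax) (min_r lmin_le_lam) GF.
  by rewrite recallE // precE; split => //; field; rewrite gt_eqF.
- move=> lam lam_gt0 lam_le_lmin.
  have precE : precision lam P Qt = lam.
    rewrite precisionE // (min_l lam_le_lmin) (min_l (le_trans lam_le_lmin lmin_le_lmax)).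
    ring.
  by rewrite recallE // precE divff // gt_eqF.
Qed.
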